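(* Let $M \ge 2$, $k_1,\dots,k_M$ positive integers, $\nu_1,\dots,\nu_M \in \mathbb{R}$, $x_{10},\dots,x_{M0} \in \mathbb{R}$, and $$0 < q_1 < p_1 < q_2 < p_2 < \cdots < q_M < p_M.$$ Let $\mathcal{M} = \{1,\dots,M\}$ and define $$P(z,\lambda) = \sum_{S \subseteq \mathcal{M}} C_S\lambda^{\nu_{S'}}z^{k_S},\qquad C_S = \Big(\prod_{(i,j)\in S\times S'} a_{ij}\Big)\Big(\prod_{j\in S'} b_j\Big),$$ where $S' = \mathcal{M}\setminus S$, $k_S = \sum_{i\in S}k_i$, $\nu_{S'} = \sum_{j\in S'}\nu_j$, and $$a_{ij} = \sqrt{\frac{(p_j-q_i)(q_j-p_i)}{(q_j-q_i)(p_j-p_i)}},\qquad b_j = \sqrt{\frac{q_j}{p_j}}\,e^{-ik_jx_{j0}}.$$ Then, provided $|\lambda| = 1$, all zeros of the polynomial $z \mapsto P(z,\lambda)$ lie in the open unit disk $\{z \in \mathbb{C} : |z| < 1\}$.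
   Context: For $|\lambda|=1$ and real exponents, powers of $\lambda$ are taken with a fixed argument: write $\lambda = e^{i\varphi}$ and set $\lambda^{\nu} = e^{i\nu\varphi}$, so that $\lambda^{\nu_{S'}} = \prod_{j\in S'}\lambda^{\nu_j}$. *)

From HB Require Import structures.
From mathcomp Require Import all_boot all_order all_algebra.
From mathcomp Require Import complex.
From mathcomp Require Import reals trigo.
Set Implicit Arguments. Unset Strict Implicit. Unset Printing Implicit Defensive.
Import Order.TTheory GRing.Theory Num.Theory.
Local Open Scope ring_scope.
Local Open Scope complex_scope.

Section Defs.
Variable R : realType.

Definition expi (t : R) : R[i] := (cos t) +i* (sin t).

(* lambda^nu for lambda = e^{i phi}, with fixed argument phi: e^{i nu phi} *)
Definition lam_pow (phi nu : R) : R[i] := expi (nu * phi).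

Variable M : nat.
Variables (k : 'I_M -> nat) (nu x0 p q : 'I_M -> R).

Definition a_coef (i j : 'I_M) : R :=
  Num.sqrt (((p j - q i) * (q j - p i)) / ((q j - q i) * (p j - p i))).

Definition b_coef (j : 'I_M) : R[i] :=
  (Num.sqrt (q j / p j))%:C * expi (- ((k j)%:R * x0 j)).

Definition C_coef (S : {set 'I_M}) : R[i] :=
  (\prod_(i in S) \prod_(j in ~: S) (a_coef i j)%:C) * \prod_(j in ~: S) b_coef j.

Definition k_sum (S : {set 'I_M}) : nat := (\sum_(i in S) k i)%N.

(* P(z, lambda) with lambda = e^{i phi};
   lambda^{nu_{S'}} = prod_{j in S'} lambda^{nu_j} *)
Definition Ppoly (phi : R) (z : R[i]) : R[i] :=
  \sum_(S : {set 'I_M}) C_coef S * (\prod_(j in ~: S) lam_pow phi (nu j)) * z ^+ k_sum S.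

End Defs.

From HB Require Import structures.
From mathcomp Require Import all_boot all_order all_algebra.
From mathcomp Require Import complex.
From mathcomp Require Import reals trigo.
From mathcomp Require Import ring lra.
Set Implicit Arguments. Unset Strict Implicit. Unset Printing Implicit Defensive.
Import Order.TTheory GRing.Theory Num.Theory.
Local Open Scope ring_scope.
Local Open Scope complex_scope.

(* With Y_j := b_j lambda^nu_j / z^k_j, P(z, lambda) is (prod_j z^k_j) times the
   Lee-Yang polynomial sum_S (prod_(i in S, j notin S) a_ij) prod_(j notin S) Y_j.
   The interleaving 0 < q_1 < p_1 < ... < q_M < p_M makes the couplings a_ij
   symmetric with 0 <= a_ij < 1, and |b_j| = sqrt (q_j / p_j) < 1, so |z| >= 1
   forces every |Y_j| < 1. The Lee-Yang circle theorem, obtained from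
   prod_j (1 + Y_j) by switching on one coupling at a time through Asano
   contractions, says that such a polynomial has no zero in the open polydisk. *)

Section AsanoContraction.
Variable R : realType.
Implicit Types (A B C D b u v w : R[i]) (c : R).

Definition bidisk_nonvanishing A B C D :=
  forall u v, `|u| < 1 -> `|v| < 1 -> A + B * u + C * v + D * (u * v) != 0.

Lemma quadratic_root_in_disk b w : `|w| < 1 ->
  exists2 r, `|r| < 1 & r ^+ 2 + b * r = w.
Proof.
move=> hw; pose d := sqrtc (b ^+ 2 + 4%:R * w).
have hd : d ^+ 2 = b ^+ 2 + 4%:R * w by rewrite sqr_sqrtc.
have root e : e ^+ 2 = d ^+ 2 -> ((e - b) / 2%:R) ^+ 2 + b * ((e - b) / 2%:R) = w.
  rewrite hd => he.
  have -> : w = (e ^+ 2 - b ^+ 2) / 4%:R by rewrite he; field.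
  by field.
have [ge1|] := real_leP (real1 _) (normr_real ((d - b) / 2%:R)); last first.
  by exists ((d - b) / 2%:R); rewrite ?root.
have [ge2|] := real_leP (real1 _) (normr_real ((- d - b) / 2%:R)); last first.
  by exists ((- d - b) / 2%:R); rewrite ?root ?sqrrN.
(* The two roots multiply to [- w], so they cannot both lie outside the disk. *)
have : 1 <= `|(d - b) / 2%:R * ((- d - b) / 2%:R)| by rewrite normrM mulr_ege1.
have -> : (d - b) / 2%:R * ((- d - b) / 2%:R) = - w.
  have -> : w = (d ^+ 2 - b ^+ 2) / 4%:R by rewrite hd; field.
  by field.
by rewrite normrN real_leNgt ?real1 ?normr_real // hw.
Qed.

Lemma asano_contraction A B C D : bidisk_nonvanishing A B C D ->
  forall w, `|w| < 1 -> A + D * w != 0.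
Proof.
move=> H w hw; have [D0|Dn0] := eqVneq D 0.
  by move: (H 0 0); rewrite normr0 ltr01 D0 !mul0r !mulr0 !addr0; apply.
have [r hr rw] := quadratic_root_in_disk ((B + C) / D) hw.
apply: contraNneq (H r r hr hr) => hA.
have -> : A = - D * w by apply/eqP; rewrite mulNr -addr_eq0 hA.
by apply/eqP; rewrite -rw; field.
Qed.

Lemma bidisk_nonvanishing_two_spin c : 0 <= c -> c < 1 ->
  bidisk_nonvanishing 1 c%:C c%:C 1.
Proof.
move=> c0 c1 u v hu hv; rewrite mul1r.
have key : `|1 + c%:C * v| ^+ 2 - `|c%:C + v| ^+ 2 = (1 - c%:C ^+ 2) * (1 - `|v| ^+ 2).
  rewrite !sqr_normc !rmorphD !rmorphM /= !oppr0.
  change (c +i* 0) with c%:C; change (1 +i* 0) with (1 : R[i]); ring.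
have hc2 : 0 < 1 - c%:C ^+ 2.
  by rewrite subr_gt0 -rmorphXn /= -(rmorph1 (real_complex R)) ltcR /= expr2 mulr_ilt1.
have hv2 : 0 < 1 - `|v| ^+ 2 by rewrite subr_gt0 expr2 mulr_ilt1.
(* v |-> (c + v) / (1 + c v) maps the disk into itself. *)
have lt : `|c%:C + v| < `|1 + c%:C * v|.
  by rewrite -(@ltr_pXn2r _ 2) ?nnegrE ?normr_ge0 // -subr_gt0 key mulr_gt0.
have : `|u * (c%:C + v)| < `|1 + c%:C * v|.
  by rewrite normrM (le_lt_trans _ lt) // ler_piMl ?normr_ge0 // ltW.
apply: contraTneq => h.
have -> : u * (c%:C + v) = - (1 + c%:C * v) by apply/eqP; rewrite -addr_eq0 -h; apply/eqP; ring.
by rewrite normrN ltxx.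
Qed.

(* Contract the product of the given polynomial in (u, v) with the two-spin
   polynomial in (u', v'), first along u = u', then along v = v'. *)
Lemma bidisk_nonvanishing_scale A B C D c : 0 <= c -> c < 1 ->
  bidisk_nonvanishing A B C D -> bidisk_nonvanishing A (c%:C * B) (c%:C * C) D.
Proof.
move=> c0 c1 H.
have contract_u v1 v2 u : `|v1| < 1 -> `|v2| < 1 -> `|u| < 1 ->
    (A + C * v1) * (1 + c%:C * v2) + ((B + D * v1) * (c%:C + v2)) * u != 0.
  move=> hv1 hv2; apply: (asano_contraction
    (B := (B + D * v1) * (1 + c%:C * v2)) (C := (A + C * v1) * (c%:C + v2))) => u1 u2 hu1 hu2.
  have -> : (A + C * v1) * (1 + c%:C * v2) + (B + D * v1) * (1 + c%:C * v2) * u1 +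
     (A + C * v1) * (c%:C + v2) * u2 + (B + D * v1) * (c%:C + v2) * (u1 * u2) =
     (A + B * u1 + C * v1 + D * (u1 * v1)) * (1 + c%:C * u2 + c%:C * v2 + 1 * (u2 * v2)).
    by ring.
  by rewrite mulf_neq0 ?H ?bidisk_nonvanishing_two_spin.
move=> u v hu hv.
have -> : A + c%:C * B * u + c%:C * C * v + D * (u * v) =
   A + c%:C * B * u + (c%:C * C + D * u) * v by ring.
apply: (asano_contraction (B := C + c%:C * D * u) (C := c%:C * A + B * u)) (hv)
  => v1 v2 hv1 hv2.
have -> : A + c%:C * B * u + (C + c%:C * D * u) * v1 + (c%:C * A + B * u) * v2 +
   (c%:C * C + D * u) * (v1 * v2) =
   (A + C * v1) * (1 + c%:C * v2) + ((B + D * v1) * (c%:C + v2)) * u by ring.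
exact: contract_u.
Qed.

End AsanoContraction.

Section LeeYang.
Variables (R : realType) (I : finType).
Implicit Types (w : I -> I -> R[i]) (Y : I -> R[i]) (S : {set I}).

Definition cut_weight w S : R[i] := \prod_(i in S) \prod_(j in ~: S) w i j.

Definition lee_yang_poly w Y : R[i] :=
  \sum_(S : {set I}) cut_weight w S * \prod_(j in ~: S) Y j.

Definition polydisk_nonvanishing (F : (I -> R[i]) -> R[i]) :=
  forall Y, (forall j, `|Y j| < 1) -> F Y != 0.

Lemma eq_lee_yang_poly w w' : (forall i j, i != j -> w i j = w' i j) ->
  lee_yang_poly w =1 lee_yang_poly w'.
Proof.
move=> ww' Y; apply: eq_bigr => S _; congr (_ * _); apply: eq_bigr => i iS.
by apply: eq_bigr => j; rewrite in_setC => jS; apply: ww'; apply: contraNneq jS => <-.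
Qed.

Lemma lee_yang_poly1 Y : lee_yang_poly (fun _ _ => 1) Y = \prod_j (1 + Y j).
Proof.
rewrite (eq_bigr (fun j => \sum_(b : bool) if b then 1 else Y j)) => [|j _]; last first.
  by rewrite big_bool.
rewrite bigA_distr_bigA /=.
rewrite (reindex (fun S : {set I} => [ffun x => x \in S])) /=; last first.
  exists (fun f : {ffun I -> bool} => [set x | f x]) => [S _|f _].
    by apply/setP => x; rewrite inE ffunE.
  by apply/ffunP => x; rewrite ffunE inE.
apply: eq_bigr => S _; rewrite /cut_weight big1 ?mul1r => [|i _]; last exact: big1.
by rewrite big_mkcond; apply: eq_bigr => j _; rewrite ffunE in_setC; case: (j \in S).
Qed.

Lemma polydisk_nonvanishing1 : polydisk_nonvanishing (lee_yang_poly (fun _ _ => 1)).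
Proof.
move=> Y hY; rewrite lee_yang_poly1 prodf_seq_neq0; apply/allP => j _ /=.
rewrite addrC addr_eq0; apply: contraTneq (hY j) => ->.
by rewrite normrN normr1 ltxx.
Qed.

Lemma prod_eq_if (A : {pred I}) x (K : R[i]) :
  \prod_(j in A) (if j == x then K else 1) = if x \in A then K else 1.
Proof.
case: ifP => xA; last by apply: big1 => j jA; case: eqP => // jx; rewrite -jx jA in xA.
by rewrite (bigD1 x) //= eqxx big1 ?mulr1 // => j /andP[_ /negbTE ->].
Qed.

Lemma prod2_eq_if (A B : {pred I}) x y (K : R[i]) :
  \prod_(i in A) \prod_(j in B) (if (i == x) && (j == y) then K else 1) =
  if (x \in A) && (y \in B) then K else 1.
Proof.
rewrite (eq_bigr (fun i => if i == x then (if y \in B then K else 1) else 1)).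
  by rewrite prod_eq_if; case: (x \in A).
by move=> i _; case: (i == x); [exact: prod_eq_if | exact: big1].
Qed.

Lemma prodD1_if (P : pred I) (F : I -> R[i]) x :
  \prod_(j | P j) F j = (if P x then F x else 1) * \prod_(j | P j && (j != x)) F j.
Proof.
case: ifP => Px; first exact: bigD1.
by rewrite mul1r; apply: eq_bigl => j; case: eqP => [->|]; rewrite ?Px ?andbT.
Qed.

Section Pair.
Variables (x y : I).
Hypothesis xy : x != y.

Definition prod_off_pair Y S : R[i] := \prod_(j in ~: S | (j != x) && (j != y)) Y j.

Definition pair_coef (omega : {set I} -> R[i]) Y (inx iny : bool) : R[i] :=
  \sum_(S : {set I} | ((x \in S) == inx) && ((y \in S) == iny)) omega S * prod_off_pair Y S.

Lemma sum_pair_expansion (omega : {set I} -> R[i]) Y :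
  \sum_(S : {set I}) omega S * \prod_(j in ~: S) Y j =
  pair_coef omega Y true true + pair_coef omega Y false true * Y x +
  pair_coef omega Y true false * Y y + pair_coef omega Y false false * (Y x * Y y).
Proof.
rewrite /pair_coef !mulr_suml !(big_mkcond (fun S : {set I} => (_ == _) && _)).
rewrite -!big_split; apply: eq_bigr => S _ /=.
rewrite (prodD1_if _ _ x) (prodD1_if _ _ y) /prod_off_pair.
rewrite (eq_bigl (fun j => (j \in ~: S) && ((j != x) && (j != y)))) => [|j]; last first.
  by rewrite andbA.
rewrite !in_setC eq_sym xy /=.
by case: (x \in S); case: (y \in S); rewrite /= ?mul0r ?add0r ?addr0 ?mulr1 ?mul1r; ring.
Qed.

Definition pair_indicator (c : R[i]) (i j : I) : R[i] :=
  if ((i == x) && (j == y)) || ((i == y) && (j == x)) then c else 1.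

Lemma cut_weight_pair_scale w w' c :
  (forall i j, i != j -> w' i j = w i j * pair_indicator c i j) ->
  forall S, cut_weight w' S = cut_weight w S * (if (x \in S) != (y \in S) then c else 1).
Proof.
move=> hw S; have indicator_split i j : pair_indicator c i j =
    (if (i == x) && (j == y) then c else 1) * (if (i == y) && (j == x) then c else 1).
  rewrite /pair_indicator; case: (eqVneq i x) => [->|] /=; last by rewrite mul1r.
  by rewrite (negbTE xy) /= orbF mulr1.
transitivity (cut_weight w S * \prod_(i in S) \prod_(j in ~: S) pair_indicator c i j).
  rewrite /cut_weight -big_split; apply: eq_bigr => i iS /=.
  rewrite -big_split; apply: eq_bigr => j; rewrite in_setC => jS.
  by rewrite hw //; apply: contraNneq jS => <-.
congr (_ * _); rewrite (eq_bigr _ (fun i _ => eq_bigr _ (fun j _ => indicator_split i j))).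
rewrite (eq_bigr _ (fun i _ => big_split _ _ _ _ _)) big_split /= !prod2_eq_if !in_setC.
by case: (x \in S); case: (y \in S); rewrite ?mulr1 ?mul1r.
Qed.

Lemma lee_yang_pair_step w w' c : 0 <= c -> c < 1 ->
  (forall i j, i != j -> w' i j = w i j * pair_indicator c%:C i j) ->
  polydisk_nonvanishing (lee_yang_poly w) -> polydisk_nonvanishing (lee_yang_poly w').
Proof.
move=> c0 c1 hw H Y hY.
have coef_scale inx iny : pair_coef (cut_weight w') Y inx iny =
    (if inx != iny then c%:C else 1) * pair_coef (cut_weight w) Y inx iny.
  rewrite mulr_sumr; apply: eq_bigr => S /andP[/eqP <- /eqP <-].
  by rewrite (cut_weight_pair_scale hw) mulrAC mulrC.
pose Yuv u v j := if j == x then u else if j == y then v else Y j.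
have coef_Yuv u v inx iny :
    pair_coef (cut_weight w) (Yuv u v) inx iny = pair_coef (cut_weight w) Y inx iny.
  apply: eq_bigr => S _; congr (_ * _).
  by apply: eq_bigr => j /andP[_ /andP[/negbTE jx /negbTE jy]]; rewrite /Yuv jx jy.
rewrite /lee_yang_poly sum_pair_expansion !coef_scale /= !mul1r.
apply: bidisk_nonvanishing_scale => // u v hu hv.
have hYuv j : `|Yuv u v j| < 1 by rewrite /Yuv; case: eqP => // _; case: eqP.
move: (H (Yuv u v) hYuv); rewrite /lee_yang_poly sum_pair_expansion !coef_Yuv.
by rewrite /Yuv eqxx [y == x]eq_sym (negbTE xy) eqxx.
Qed.

End Pair.

Lemma set2_eq (i j x y : I) : x != y ->
  ([set i; j] == [set x; y]) = ((i == x) && (j == y)) || ((i == y) && (j == x)).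
Proof.
move=> xy; apply/eqP/idP => [e|/orP[]/andP[/eqP-> /eqP->] //]; last exact: setUC.
have := set21 i j; have := set22 i j; have := set21 x y; have := set22 x y.
rewrite e -[in X in X -> _]e -[in X in _ -> X -> _]e !in_set2.
by do 4!case/orP=> /eqP ?; subst; rewrite ?eqxx ?orbT // in xy *.
Qed.

Theorem lee_yang_circle (a : I -> I -> R) :
  (forall i j, a i j = a j i) -> (forall i j, i != j -> 0 <= a i j < 1) ->
  polydisk_nonvanishing (lee_yang_poly (fun i j => (a i j)%:C)).
Proof.
move=> asym abd.
pose wE (E : {set {set I}}) i j := if [set i; j] \in E then (a i j)%:C else 1.
have switched_on n (E : {set {set I}}) : #|E| = n -> (forall s, s \in E -> #|s| = 2) ->
    polydisk_nonvanishing (lee_yang_poly (wE E)).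
  elim: n E => [|n IH] E cardE E2.
    move=> Y hY; rewrite (eq_lee_yang_poly (w' := fun _ _ => 1)).
      exact: polydisk_nonvanishing1.
    by move=> i j _; rewrite /wE (cards0_eq cardE) in_set0.
  have [s sE] : exists s, s \in E by apply/set0Pn; rewrite -card_gt0 cardE.
  have [x [y [xy sxy]]] := cards2P s (introT eqP (E2 s sE)).
  have /andP[a0 a1] := abd x y xy.
  apply: (lee_yang_pair_step xy (w := wE (E :\ s)) a0 a1); last first.
    apply: IH => [|t /setD1P[_ /E2] //].
    by move: cardE; rewrite (cardsD1 s) sE add1n => -[].
  move=> i j ij; rewrite /wE /pair_indicator -set2_eq // -sxy in_setD1.
  case: eqP => [e|_]; last by rewrite mulr1.
  rewrite e sE mul1r; congr (_%:C).
  have : [set i; j] == [set x; y] by rewrite e sxy.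
  by rewrite set2_eq // => /orP[]/andP[/eqP-> /eqP->]; last rewrite asym.
move=> Y hY; rewrite (eq_lee_yang_poly (w' := wE [set s : {set I} | #|s| == 2])).
  by apply: switched_on => // s; rewrite inE => /eqP.
by move=> i j ij; rewrite /wE inE cards2 ij.
Qed.

End LeeYang.

Section Theorem3.
Variables (R : realType) (M : nat) (k : 'I_M -> nat) (nu x0 p q : 'I_M -> R).

Lemma norm_expi (t : R) : `|expi t| = 1.
Proof. by rewrite normc_def /= cos2Dsin2 sqrtr1. Qed.

Lemma a_coef_sym i j : a_coef p q i j = a_coef p q j i.
Proof. by rewrite /a_coef; congr Num.sqrt; congr (_ * _^-1); ring. Qed.

Lemma Ppoly_factor phi z : z != 0 ->
  Ppoly k nu x0 p q phi z = (\prod_j z ^+ k j) *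
    lee_yang_poly (fun i j => (a_coef p q i j)%:C)
      (fun j => b_coef k x0 p q j * lam_pow phi (nu j) / z ^+ k j).
Proof.
move=> z0; rewrite /Ppoly /lee_yang_poly mulr_sumr; apply: eq_bigr => S _.
rewrite /C_coef /k_sum (big_morph _ (exprD z) (expr0 z)) prodf_div.
rewrite [\prod_(j in ~: S) (_ * lam_pow _ _)]big_split [\prod_(j < M) _](bigID (mem S)) /=.
rewrite [\prod_(i < M | i \notin S) _](eq_bigl (fun j => j \in ~: S)); last first.
  by move=> j; rewrite in_setC.
have zS'_neq0 : \prod_(j in ~: S) z ^+ k j != 0.
  by rewrite prodf_seq_neq0; apply/allP => j _; rewrite expf_neq0 ?implybT.
by rewrite /cut_weight; field.
Qed.

Hypotheses (hq0 : forall i, 0 < q i) (hqp : forall i, q i < p i)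
  (hpq : forall i j : 'I_M, (i < j)%N -> p i < q j).

Lemma a_coef_bound i j : i != j -> 0 <= a_coef p q i j < 1.
Proof.
wlog ij : i j / (i < j)%N => [hwlog ne|_].
  case: (ltngtP i j) => [lt|gt|eq]; first exact: hwlog.
    by rewrite a_coef_sym; apply: hwlog gt _; rewrite eq_sym.
  by rewrite (val_inj eq) eqxx in ne.
rewrite sqrtr_ge0 /= -(sqrtr1 R) ltr_sqrt ?ltr01 //.
have := hqp i; have := hqp j; have := hpq ij => hpiqj hqpj hqpi.
rewrite ltr_pdivrMr ?mulr_gt0 ?subr_gt0 ?(lt_trans hqpi hpiqj) ?(lt_trans hpiqj hqpj) //.
(* (q_j - q_i)(p_j - p_i) - (p_j - q_i)(q_j - p_i) = (p_j - q_j)(p_i - q_i) *)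
by rewrite mul1r -subr_gt0; nra.
Qed.

Lemma norm_b_coef_lt1 j : `|b_coef k x0 p q j| < 1.
Proof.
rewrite normrM norm_expi mulr1 ger0_norm ?ler0c ?sqrtr_ge0 //.
rewrite -(rmorph1 (real_complex R)) ltcR /= -(sqrtr1 R) ltr_sqrt ?ltr01 //.
by rewrite ltr_pdivrMr ?mul1r ?(lt_trans (hq0 j)).
Qed.

End Theorem3.

Theorem theorem3 (R : realType) (M : nat) (hM : (2 <= M)%N)
  (k : 'I_M -> nat) (nu x0 p q : 'I_M -> R)
  (hk : forall i : 'I_M, (0 < k i)%N)
  (hq0 : forall i : 'I_M, 0 < q i)
  (hqp : forall i : 'I_M, q i < p i)
  (hpq : forall i j : 'I_M, (i < j)%N -> p i < q j)
  (lam : R[i]) (phi : R) (hlam : `|lam| = 1) (hphi : lam = expi phi)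
  (z : R[i]) (hz : Ppoly k nu x0 p q phi z = 0) :
  `|z| < 1.
Proof.
rewrite real_ltNge ?normr_real ?real1 //; apply/negP => z_ge1; move: hz; apply/eqP.
have z0 : z != 0 by apply: contraTneq z_ge1 => ->; rewrite normr0 ler10.
have zk_ge1 j : 1 <= `|z ^+ k j| by rewrite normrX exprn_ege1.
rewrite Ppoly_factor // mulf_neq0 //.
  by rewrite prodf_seq_neq0; apply/allP => j _; rewrite expf_neq0.
apply: lee_yang_circle => [i j|i j|j]; first exact: a_coef_sym.
  exact: a_coef_bound.
rewrite normrM normfV normrM norm_expi mulr1.
apply: le_lt_trans (norm_b_coef_lt1 k x0 hq0 hqp j).
by rewrite ler_pdivrMr ?(lt_le_trans ltr01) // ler_peMr ?normr_ge0.
Qed.
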